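(* Let $\mathfrak{H}$ be a complete Heyting algebra and define its point-free coderivative by $\divideontimes \mathsf{h} := \bigwedge_{\mathsf{i}\in\mathfrak{H}}(\mathsf{i}\vee(\mathsf{i}\to\mathsf{h}))$. Then $\divideontimes$ is an $\mathsf{mHC}$-operator, i.e. $\divideontimes\top=\top$, $\divideontimes(a\wedge b)=\divideontimes a\wedge\divideontimes b$, $a\le\divideontimes a$, and $\divideontimes a\le b\vee(b\to a)$ for all $a,b\in\mathfrak{H}$. *)

From HB Require Import structures.
From mathcomp Require Import all_boot all_order.
Set Implicit Arguments. Unset Strict Implicit. Unset Printing Implicit Defensive.
Import Order.TTheory.
Local Open Scope order_scope.

(* All operations are specified by their universal properties, hence are
   uniquely determined by the order. *)
Record completeHeyting (d : Order.disp_t) (T : porderType d) := CompleteHeyting {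
  cinf : (T -> Prop) -> T;
  cmeet : T -> T -> T;
  cjoin : T -> T -> T;
  cimp : T -> T -> T;
  ctop : T;
  cinf_lb : forall (S : T -> Prop) x, S x -> cinf S <= x;
  cinf_glb : forall (S : T -> Prop) y, (forall x, S x -> y <= x) -> y <= cinf S;
  cmeet_glb : forall a b x, (x <= cmeet a b) = (x <= a) && (x <= b);
  cjoin_lub : forall a b x, (cjoin a b <= x) = (a <= x) && (b <= x);
  ctop_max : forall x, x <= ctop;
  cimp_adj : forall a b x, (cmeet x a <= b) = (x <= cimp a b)
}.

Definition coderiv d (T : porderType d) (H : completeHeyting T) (h : T) : T :=
  cinf H (fun x => exists i : T, x = cjoin H i (cimp H i h)).

From HB Require Import structures.
From mathcomp Require Import all_boot all_order.
Local Open Scope order_scope.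
Import Order.TTheory.
Set Implicit Arguments. Unset Strict Implicit.

(* Each map h |-> i \/ (i -> h) lies above the identity, is monotone, and
   preserves binary meets, because implication preserves meets in its second
   argument and joins distribute over meets in a Heyting algebra.  The
   coderivative is the infimum of these maps, so it inherits all three
   properties; the inequality coderiv a <= b \/ (b -> a) is the instance i = b
   of the defining lower bound, and coderiv top = top follows from
   top <= coderiv top. *)

Section CompleteHeytingTheory.
Variables (d : Order.disp_t) (T : porderType d) (H : completeHeyting T).
Local Notation meet := (cmeet H).
Local Notation join := (cjoin H).
Local Notation imp := (cimp H).

Lemma cmeet_le_l a b : meet a b <= a.
Proof. by have := cmeet_glb H a b (meet a b); rewrite lexx => /esym/andP[]. Qed.

Lemma cmeet_le_r a b : meet a b <= b.
Proof. by have := cmeet_glb H a b (meet a b); rewrite lexx => /esym/andP[]. Qed.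

Lemma le_cjoin_l a b : a <= join a b.
Proof. by have := cjoin_lub H a b (join a b); rewrite lexx => /esym/andP[]. Qed.

Lemma le_cjoin_r a b : b <= join a b.
Proof. by have := cjoin_lub H a b (join a b); rewrite lexx => /esym/andP[]. Qed.

Lemma le_cmeet a b x : x <= a -> x <= b -> x <= meet a b.
Proof. by move=> xa xb; rewrite cmeet_glb xa xb. Qed.

Lemma cjoin_le a b x : a <= x -> b <= x -> join a b <= x.
Proof. by move=> ax bx; rewrite cjoin_lub ax bx. Qed.

Lemma cmeetC_le a b : meet a b <= meet b a.
Proof. exact: le_cmeet (cmeet_le_r a b) (cmeet_le_l a b). Qed.

Lemma cimp_modus_ponens a b : meet (imp a b) a <= b.
Proof. by rewrite cimp_adj. Qed.

Lemma le_cimp a i : a <= imp i a.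
Proof. by rewrite -cimp_adj cmeet_le_l. Qed.

Lemma cimp_mono_r i a b : a <= b -> imp i a <= imp i b.
Proof. by move=> ab; rewrite -cimp_adj (le_trans (cimp_modus_ponens i a)). Qed.

Lemma cimp_cmeet i a b : meet (imp i a) (imp i b) <= imp i (meet a b).
Proof.
rewrite -cimp_adj; apply: le_cmeet.
- apply: le_trans (cimp_modus_ponens i a).
  exact: le_cmeet (le_trans (cmeet_le_l _ _) (cmeet_le_l _ _)) (cmeet_le_r _ _).
- apply: le_trans (cimp_modus_ponens i b).
  exact: le_cmeet (le_trans (cmeet_le_l _ _) (cmeet_le_r _ _)) (cmeet_le_r _ _).
Qed.

(* Both arguments of the meet are moved across the adjunction in turn, so only
   the universal property of the join is ever used. *)
Lemma cjoin_cmeet_distr i p q :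
  meet (join i p) (join i q) <= join i (meet p q).
Proof.
rewrite cimp_adj; apply: cjoin_le.
  by rewrite -cimp_adj (le_trans (cmeet_le_l _ _)) ?le_cjoin_l.
rewrite -cimp_adj (le_trans (cmeetC_le _ _)) // cimp_adj; apply: cjoin_le.
  by rewrite -cimp_adj (le_trans (cmeet_le_l _ _)) ?le_cjoin_l.
by rewrite -cimp_adj (le_trans (cmeetC_le _ _)) ?le_cjoin_r.
Qed.

Lemma coderiv_le h i : coderiv H h <= join i (imp i h).
Proof. by apply: cinf_lb; exists i. Qed.

Lemma le_coderiv h y : (forall i, y <= join i (imp i h)) -> y <= coderiv H h.
Proof. by move=> hy; apply: cinf_glb => x [i ->]. Qed.

Lemma le_coderiv_id a : a <= coderiv H a.
Proof. by apply: le_coderiv => i; rewrite (le_trans (le_cimp a i)) ?le_cjoin_r. Qed.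

Lemma coderiv_mono a b : a <= b -> coderiv H a <= coderiv H b.
Proof.
move=> ab; apply: le_coderiv => i; apply: le_trans (coderiv_le a i) _.
apply: cjoin_le; first exact: le_cjoin_l.
exact: le_trans (cimp_mono_r i ab) (le_cjoin_r _ _).
Qed.

Lemma coderiv_top : coderiv H (ctop H) = ctop H.
Proof. by apply/le_anti; rewrite ctop_max le_coderiv_id. Qed.

Lemma coderiv_cmeet a b :
  coderiv H (meet a b) = meet (coderiv H a) (coderiv H b).
Proof.
apply/le_anti/andP; split.
  by apply: le_cmeet; apply: coderiv_mono; [apply: cmeet_le_l|apply: cmeet_le_r].
apply: le_coderiv => i.
have meet_le_joins : meet (coderiv H a) (coderiv H b)
    <= meet (join i (imp i a)) (join i (imp i b)).
  by apply: le_cmeet; [apply: le_trans (cmeet_le_l _ _) (coderiv_le a i)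
                      |apply: le_trans (cmeet_le_r _ _) (coderiv_le b i)].
apply: le_trans meet_le_joins (le_trans (cjoin_cmeet_distr _ _ _) _).
apply: cjoin_le; first exact: le_cjoin_l.
exact: le_trans (cimp_cmeet i a b) (le_cjoin_r _ _).
Qed.

End CompleteHeytingTheory.

Theorem proposition4p3 (d : Order.disp_t) (T : porderType d)
    (H : completeHeyting T) :
  coderiv H (ctop H) = ctop H /\
  (forall a b : T, coderiv H (cmeet H a b) = cmeet H (coderiv H a) (coderiv H b)) /\
  (forall a : T, a <= coderiv H a) /\
  (forall a b : T, coderiv H a <= cjoin H b (cimp H b a)).
Proof.
split; first exact: coderiv_top.
split; first exact: coderiv_cmeet.
split; first exact: le_coderiv_id.
by move=> a b; apply: coderiv_le.
Qed.
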